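(* Let $\nu$ be a translation invariant EA$_\beta$ spin glass distribution on $\mathbb Z^2$ ($0\le\beta<\infty$), and let $\gamma$ be a finite dual graph which is a union of disjoint simple dual cycles. Then for every $c>0$, \[\mathbb P_\nu\Big(\sum_{e^*\in\gamma}w_e\sigma_{i_e}\sigma_{j_e}\leq -c\Big)<e^{-2\beta c},\] where $e=\{i_e,j_e\}$ is the primal edge crossed by $e^*$. Moreover, for every finite subgraph $D$ of $\mathbb Z^2$ with $D_\gamma\subseteq D$, every boundary condition $\tau$ and every realization of the interactions $w$, \[\mathbb P^{D,\tau}_{w,\beta}(\text{every edge of }\gamma\text{ is unsatisfied})<e^{-2\beta|w|(\gamma)}.\]
   Context: Lattice $\mathbb Z^2$, dual lattice $(\mathbb Z^2)^*=(\tfrac12,\tfrac12)+\mathbb Z^2$; a dual edge $e^*$ is identified with the unique edge $e$ of $\mathbb Z^2$ it crosses and carries its interaction $w_e$. $D_\gamma$ is the set of vertices of $\mathbb Z^2$ lying in the bounded domains enclosed by $\gamma$; $|w|(\gamma)=\sum_{e^*\in\gamma}|w_e|$. For a finite subgraph $C$: $C^c$ is the subgraph on $\mathbb Z^2\setminus V(C)$, $\partial C^c$ the vertices of $C^c$ with a neighbour in $C$, $\bar C=C\cup\partial C^c$; for $\tau\in\{\pm1\}^{V(\partial C^c)}$, $\Omega^{C,\tau}$ is the set of spin configurations on $\bar C$ equal to $\tau$ on $\partial C^c$, $\mathcal H^{C,\tau}_w(\sigma)=-\sum w_{xy}\sigma_x\sigma_y$ over neighbouring pairs in $\bar C$, and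 $\mathbb P^{C,\tau}_{w,\beta}(\sigma)\propto e^{-\beta\mathcal H^{C,\tau}_w(\sigma)}$. An EA$_\beta$ spin glass distribution is a joint law of interactions $w$ (i.i.d. standard normal) and spins $\sigma\in\{\pm1\}^{\mathbb Z^2}$ such that for every finite $C$ the conditional law of $\sigma_{\bar C}$ given $\sigma_{C^c}$ and $w$ is $\mathbb P^{C,\sigma_{\partial C^c}}_{w,\beta}$; translation invariance is under the diagonal action of $\mathbb Z^2$. An edge $e=\{i,j\}$ (and $e^*$) is unsatisfied if $w_e\sigma_i\sigma_j<0$. *)

From HB Require Import structures.
From mathcomp Require Import all_boot all_order all_algebra.
From mathcomp Require Import all_classical all_reals all_analysis.
Set Implicit Arguments. Unset Strict Implicit. Unset Printing Implicit Defensive.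
Import Order.TTheory GRing.Theory Num.Theory.
Import numFieldNormedType.Exports.
Local Open Scope classical_set_scope.
Local Open Scope ring_scope.

Definition Z2 := (int * int)%type.

(** An edge is encoded by its lower-left endpoint and a direction:
    (x, true)  = {x, x + (1,0)}   (horizontal edge)
    (x, false) = {x, x + (0,1)}   (vertical edge).
    Every nearest-neighbour pair of Z^2 has exactly one code. *)
Definition edge := (Z2 * bool)%type.
Definition end1 (e : edge) : Z2 := e.1.
Definition end2 (e : edge) : Z2 :=
  if e.2 then (e.1.1 + 1, e.1.2)%R else (e.1.1, e.1.2 + 1)%R.

Definition nbrs (x : Z2) : seq Z2 :=
  [:: (x.1 + 1, x.2); (x.1 - 1, x.2); (x.1, x.2 + 1); (x.1, x.2 - 1)]%R.

Definition spin {R : realType} (b : bool) : R := if b then 1 else -1.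

(** * Finite domains.  A finite subgraph C is represented by its (finite) vertex
    set V(C) (everything below only depends on V(C)). *)
Definition bdry (C : seq Z2) : seq Z2 :=
  undup [seq y <- flatten (map nbrs C) | y \notin C].
Definition clos (C : seq Z2) : seq Z2 := undup C ++ bdry C.
Definition edges_in (S : seq Z2) : seq edge :=
  [seq e <- [seq (x, b) | x <- S, b <- [:: true; false]] | end2 e \in S].

Definition glue (C : seq Z2) (tau : Z2 -> bool) (f : {ffun seq_sub C -> bool})
  : Z2 -> bool :=
  fun x => match (insub x : option (seq_sub C)) with
           | Some y => f y | None => tau x end.

Definition hamil {R : realType} (C : seq Z2) (w : edge -> R) (s : Z2 -> bool) : R :=
  - \sum_(e <- edges_in (clos C)) w e * spin (s (end1 e)) * spin (s (end2 e)).

(** P^{C,tau}_{w,beta}(A) for an event A on configurations (the configurations of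
    Omega^{C,tau} are the glue C tau f, f ranging over spins on V(C)) *)
Definition gibbs {R : realType} (C : seq Z2) (tau : Z2 -> bool) (w : edge -> R)
  (beta : R) (A : (Z2 -> bool) -> bool) : R :=
  (\sum_(f : {ffun seq_sub C -> bool} | A (glue tau f))
      expR (- beta * hamil C w (glue tau f)))
  / (\sum_(f : {ffun seq_sub C -> bool}) expR (- beta * hamil C w (glue tau f))).

Definition restr (S : seq Z2) (s : Z2 -> bool) : {ffun seq_sub S -> bool} :=
  [ffun y : seq_sub S => s (val y)].

Definition Omega (R : realType) := ((edge -> R) * (Z2 -> bool))%type.

Definition coord_gens (R : realType) (V : Z2 -> Prop) : set (set (Omega R)) :=
  [set A | (exists (e : edge) (B : set R), measurable B /\ A = [set om | B (om.1 e)])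
        \/ (exists (x : Z2) (b : bool), V x /\ A = [set om | om.2 x = b])].

Definition OmegaM (R : realType) := g_sigma_algebraType (@coord_gens R (fun _ => True)).

Definition iid_std_normal {R : realType} (P : probability (OmegaM R) R) : Prop :=
  forall (es : seq edge) (B : edge -> set R), uniq es ->
    (forall e, measurable (B e)) ->
    P [set om : OmegaM R | forall e, e \in es -> B e (om.1 e)]
    = \big[*%E/1%E]_(e <- es) normal_prob 0 1 (B e).

(** DLR condition: for every finite C, the conditional law of sigma_{C̄} given
    (sigma_{C^c}, w) is P^{C, sigma_{∂C^c}}_{w,beta}; i.e. for every event E on
    C̄-configurations and every event A of the sigma-algebra generated by
    sigma_{C^c} and w,  P(A ∩ {sigma_{C̄} ∈ E}) = ∫_A P^{C,sigma}_{w,beta}(E) dP. *)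
Definition DLR {R : realType} (P : probability (OmegaM R) R) (beta : R) : Prop :=
  forall (C : seq Z2) (E : {ffun seq_sub (clos C) -> bool} -> bool)
         (A : set (OmegaM R)),
    <<s @coord_gens R (fun x => x \notin C) >> A ->
    P (A `&` [set om | E (restr (clos C) om.2)])
    = (\int[P]_(om in A)
         (gibbs C om.2 om.1 beta (fun s => E (restr (clos C) s)))%:E)%E.

Definition EA_spin_glass {R : realType} (beta : R) (P : probability (OmegaM R) R) : Prop :=
  iid_std_normal P /\ DLR P beta.

Definition shift {R : realType} (a : Z2) (om : OmegaM R) : OmegaM R :=
  (fun e : edge => om.1 ((e.1.1 + a.1, e.1.2 + a.2)%R, e.2),
   fun x : Z2 => om.2 (x.1 + a.1, x.2 + a.2)%R).

Definition transl_invariant {R : realType} (P : probability (OmegaM R) R) : Prop :=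
  forall (a : Z2) (A : set (OmegaM R)), measurable A ->
    P (shift a @^-1` A) = P A.

(** * Dual lattice.  The dual vertex (a,b) stands for the point (a+1/2, b+1/2). *)
Definition dvert := (int * int)%type.

Definition dual_ends (e : edge) : dvert * dvert :=
  if e.2 then ((e.1.1, e.1.2 - 1), (e.1.1, e.1.2))%R
  else ((e.1.1 - 1, e.1.2), (e.1.1, e.1.2))%R.

Definition crosses (e : edge) (u v : dvert) : bool :=
  (dual_ends e == (u, v)) || (dual_ends e == (v, u)).

Definition cnext (p : seq dvert) (i : nat) : dvert := nth (0, 0)%R p (i.+1 %% size p).

Definition simple_dual_cycle (p : seq dvert) : Prop :=
  (3 <= size p)%N /\ uniq p /\
  forall i, (i < size p)%N -> exists e, crosses e (nth (0,0)%R p i) (cnext p i).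

(** the dual edges of the cycle p (identified with the primal edges they cross) *)
Definition cycle_edge (p : seq dvert) (e : edge) : Prop :=
  exists i, (i < size p)%N /\ crosses e (nth (0,0)%R p i) (cnext p i).

Definition union_disjoint_simple_cycles (g : seq edge) : Prop :=
  exists cs : seq (seq dvert),
    cs != [::] /\
    (forall p, p \in cs -> simple_dual_cycle p) /\
    (forall i j, (i < size cs)%N -> (j < size cs)%N -> i <> j ->
       forall v, v \in nth [::] cs i -> v \notin nth [::] cs j) /\
    (forall e, e \in g <-> exists2 p, p \in cs & cycle_edge p e).

Definition dpt {R : realType} (v : dvert) : R * R :=
  (v.1%:~R + 2^-1, v.2%:~R + 2^-1).

Definition segment {R : realType} (p q : R * R) : set (R * R) :=
  [set z | exists t : R, 0 <= t <= 1 /\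
           z = (p.1 + t * (q.1 - p.1), p.2 + t * (q.2 - p.2))].

Definition gamma_set {R : realType} (g : seq edge) : set (R * R) :=
  [set z | exists2 e, e \in g & segment (dpt (dual_ends e).1) (dpt (dual_ends e).2) z].

Definition D_gamma {R : realType} (g : seq edge) (v : Z2) : Prop :=
  let z : R * R := (v.1%:~R, v.2%:~R) in
  ~ gamma_set g z /\ bounded_set (connected_component (~` gamma_set g) z).

Definition gamma_energy {R : realType} (g : seq edge) (w : edge -> R) (s : Z2 -> bool) : R :=
  \sum_(e <- g) w e * spin (s (end1 e)) * spin (s (end2 e)).

Definition absw {R : realType} (g : seq edge) (w : edge -> R) : R :=
  \sum_(e <- g) `|w e|.

Definition unsatisfied {R : realType} (w : edge -> R) (s : Z2 -> bool) (e : edge) : bool :=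
  w e * spin (s (end1 e)) * spin (s (end2 e)) < 0.

From Pilot Require Import Defs.
From HB Require Import structures.
From mathcomp Require Import all_boot all_order all_algebra.
From mathcomp Require Import all_classical all_reals all_analysis.
From mathcomp Require Import measurable_realfun.
From mathcomp Require Import zify ring lra.
Import Order.TTheory GRing.Theory Num.Theory.
Import numFieldNormedType.Exports.
Local Open Scope classical_set_scope.
Local Open Scope ring_scope.
Set Implicit Arguments. Unset Strict Implicit. Unset Printing Implicit Defensive.

(* Let S be the set of vertices x such that the horizontal ray from x to the right
   crosses gamma an odd number of times. Every dual vertex has even degree in gamma,
   so the edges of Z^2 with exactly one endpoint in S are exactly the edges crossed
   by gamma; moreover S is finite and contained in D_gamma.  Flipping all spins in S
   therefore changes the sign of the terms of gamma and of no other term, so it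
   raises the energy by 2 sum_gamma w_e s_i s_j.  In a finite volume containing S,
   the flip maps {gamma all unsatisfied} to a disjoint event whose weight is larger
   by the factor exp(2 beta |w|(gamma)); for the infinite-volume bound, the DLR
   equations (conditioning on the interactions and on the spins outside a box
   containing S) show that the flip maps {sum_gamma <= -c} to the disjoint event
   {sum_gamma >= c} while multiplying probabilities by at least exp(2 beta c).  In
   both cases p <= k q and p + q <= 1 give p <= k / (1 + k) < k. *)

(** * Measurability of local observables *)

Section CoordinateMeasurability.
Variable R : realType.

Lemma measurable_interaction (V : Z2 -> Prop) (e : edge) :
  measurable_fun [set: g_sigma_algebraType (@coord_gens R V)] (fun om => om.1 e).
Proof. by move=> _ Y mY; rewrite setTI; apply: sub_sigma_algebra; left; exists e, Y. Qed.

Lemma measurable_spin (x : Z2) : measurable_fun [set: OmegaM R] (fun om => om.2 x).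
Proof.
apply: (measurable_fun_bool true); rewrite setTI.
by apply: sub_sigma_algebra; right; exists x, true.
Qed.

Lemma measurable_local_spin_fun d (T : measurableType d) (L : seq Z2)
    (G : (Z2 -> bool) -> T) :
  (forall s s', {in L, s =1 s'} -> G s = G s') ->
  measurable_fun [set: OmegaM R] (fun om => G om.2).
Proof.
elim: L G => [|x L IH] G localG.
  rewrite (_ : (fun om => _) = cst (G (fun _ => false))); first exact: measurable_cst.
  by apply/funext => om; apply: localG.
pose set_x b (s : Z2 -> bool) y := if y == x then b else s y.
have measurable_set_x b : measurable_fun [set: OmegaM R] (fun om => G (set_x b om.2)).
  apply: (IH (fun s => G (set_x b s))) => s s' ss'.
  by apply: localG => y; rewrite /set_x inE; case: eqP => //= _ /ss'.
rewrite (_ : (fun om => _) =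
    (fun om => if om.2 x then G (set_x true om.2) else G (set_x false om.2))).
  exact: measurable_fun_ifT (measurable_spin x) _ _.
by apply/funext => om; case sx: (om.2 x); apply: localG => y _; rewrite /set_x;
  case: eqP => // ->.
Qed.

Lemma coord_gens_measurable (V : Z2 -> Prop) (A : set (OmegaM R)) :
  <<s @coord_gens R V >> A -> measurable A.
Proof.
apply: smallest_sub; first exact: smallest_sigma_algebra.
move=> B [genB|[x [b [_ ->]]]]; apply: sub_sigma_algebra; first by left.
by right; exists x, b.
Qed.

End CoordinateMeasurability.

Lemma measure_bigsetU_seq d (T : ringOfSetsType d) (R : realFieldType)
    (mu : {content set T -> \bar R}) (I : choiceType) (s : seq I) (F : I -> set T) :
  uniq s -> (forall i, measurable (F i)) ->
  (forall i j, i != j -> F i `&` F j = set0) ->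
  mu (\big[setU/set0]_(i <- s) F i) = (\sum_(i <- s) mu (F i))%E.
Proof.
elim: s => [|i s IH] /= uniq_s measF disjF; first by rewrite !big_nil measure0.
case/andP: uniq_s => i_notin_s uniq_s.
rewrite !big_cons measureU //; first by rewrite IH.
- exact: bigsetU_measurable.
rewrite -bigcup_seq; apply/seteqP; split => // x [Fix [j /= js Fjx]].
have ij : i != j by apply: contraNneq i_notin_s => ->.
have : (F i `&` F j) x by split.
by rewrite disjF.
Qed.

Section GibbsMeasurability.
Variable R : realType.

Lemma glue_eq (C : seq Z2) (f : {ffun seq_sub C -> bool}) (s s' : Z2 -> bool) x :
  s x = s' x -> Defs.glue s f x = Defs.glue s' f x.
Proof. by rewrite /Defs.glue; case: (insub x). Qed.

Lemma partition_fun_gt0 (C : seq Z2) tau (w : edge -> R) beta :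
  0 < \sum_(f : {ffun seq_sub C -> bool}) expR (- beta * hamil C w (Defs.glue tau f)).
Proof.
rewrite (bigD1 [ffun => true]) //= ltr_pwDl ?expR_gt0 //.
by apply: sumr_ge0 => f _; exact: expR_ge0.
Qed.

Lemma gibbs_ge0 (C : seq Z2) tau (w : edge -> R) beta A : 0 <= gibbs C tau w beta A.
Proof. by rewrite /gibbs divr_ge0 //; apply: sumr_ge0 => f _; exact: expR_ge0. Qed.

Lemma measurable_hamil_glue (C : seq Z2) (f : {ffun seq_sub C -> bool}) :
  measurable_fun [set: OmegaM R] (fun om : OmegaM R => hamil C om.1 (Defs.glue om.2 f)).
Proof.
have measurable_glue_spin x :
    measurable_fun [set: OmegaM R] (fun om : OmegaM R => spin (Defs.glue om.2 f x) : R).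
  apply: (@measurable_local_spin_fun R _ R [:: x] (fun s => spin (Defs.glue s f x))).
  by move=> s s' ss'; rewrite (@glue_eq _ _ s s') // ss' ?mem_head.
apply: measurable_funN; apply: measurable_sum => e.
apply: measurable_funM (measurable_glue_spin _); apply: measurable_funM (measurable_glue_spin _).
exact: (@measurable_interaction R (fun _ => True) e).
Qed.

Lemma measurable_gibbs (C L : seq Z2) (beta : R) (A : (Z2 -> bool) -> bool) :
  (forall (f : {ffun seq_sub C -> bool}) s s', {in L, s =1 s'} ->
      A (Defs.glue s f) = A (Defs.glue s' f)) ->
  measurable_fun [set: OmegaM R] (fun om : OmegaM R => gibbs C om.2 om.1 beta A).
Proof.
move=> localA.
pose weight (f : {ffun seq_sub C -> bool}) (om : OmegaM R) :=
  expR (- beta * hamil C om.1 (Defs.glue om.2 f)).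
have measurable_weight f : measurable_fun [set: OmegaM R] (weight f).
  apply: measurableT_comp; first exact: measurable_expR.
  exact: measurable_funM (measurable_hamil_glue f).
(* The normalisation [Z^-1] is written [expR (- ln Z)], whose measurability follows
   from that of [expR] and [ln]. *)
rewrite (_ : (fun om => _) = (fun om =>
   (\sum_f ((A (Defs.glue om.2 f))%:R * weight f om)) * expR (- ln (\sum_f weight f om)))).
  apply: measurable_funM.
    apply: measurable_sum => f; apply: measurable_funM => //.
    apply: (@measurable_local_spin_fun R _ R L (fun s => (A (Defs.glue s f))%:R)).
    by move=> s s' ss'; rewrite (localA f s s').
  apply: measurableT_comp; first exact: measurable_expR.
  apply/measurable_funN/measurableT_comp; first exact: measurable_ln.
  exact: measurable_sum.
apply/funext => om; rewrite expRN lnK ?posrE ?partition_fun_gt0 //.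
rewrite /gibbs big_mkcond /=; congr (_ / _).
by apply: eq_bigr => f _; case: (A _); rewrite ?mul1r ?mul0r.
Qed.

End GibbsMeasurability.

(** * Flipping the spins of a region bounded by gamma *)

Lemma lt_of_le_mul_of_add_le1 (R : realFieldType) (k p q : R) :
  0 < k -> p <= k * q -> p + q <= 1 -> p < k.
Proof. by move=> k_gt0 pkq pq1; nra. Qed.

Lemma gibbs_disjoint_le1 (R : realType) (C : seq Z2) tau (w : edge -> R) beta
    (A B : (Z2 -> bool) -> bool) :
  (forall s, A s -> ~~ B s) -> gibbs C tau w beta A + gibbs C tau w beta B <= 1.
Proof.
move=> AnB; rewrite /gibbs -mulrDl ler_pdivrMr ?partition_fun_gt0 // mul1r.
rewrite (big_mkcond (fun f => A _)) (big_mkcond (fun f => B _)) -big_split /=.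
apply: ler_sum => f _; have := AnB (Defs.glue tau f).
case: (A _) => [/(_ isT) /negbTE -> | _]; last case: (B _).
all: by rewrite /= ?add0r ?addr0 ?expR_ge0.
Qed.

Lemma end2_nbrs e : end2 e \in nbrs (end1 e).
Proof. by case: e => [[a b] []]; rewrite /end1 /end2 /nbrs /= !inE eqxx ?orbT. Qed.

Lemma end1_nbrs e : end1 e \in nbrs (end2 e).
Proof. by case: e => [[a b] []]; rewrite /end1 /end2 /nbrs /= !inE addrK eqxx ?orbT. Qed.

Lemma mem_clos D x : x \in D -> x \in clos D.
Proof. by rewrite /clos mem_cat mem_undup => ->. Qed.

Lemma nbrs_clos D x y : x \in D -> y \in nbrs x -> y \in clos D.
Proof.
move=> xD yx; rewrite /clos mem_cat mem_undup; case: (boolP (y \in D)) => //= yD.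
by rewrite /bdry mem_undup mem_filter yD /=; apply/flatten_mapP; exists x.
Qed.

Lemma clos_uniq D : uniq (clos D).
Proof.
rewrite /clos cat_uniq undup_uniq /bdry undup_uniq andbT /=.
by apply/hasPn => x; rewrite !mem_undup mem_filter => /andP[].
Qed.

Lemma mem_edges_in V e : (e \in edges_in V) = (end1 e \in V) && (end2 e \in V).
Proof.
rewrite /edges_in mem_filter andbC; congr (_ && _).
apply/allpairsP/idP => [[[x b] [xV _ ->]] // | eV].
by exists (e.1, e.2); case: e eV => x [].
Qed.

Lemma edges_in_uniq V : uniq V -> uniq (edges_in V).
Proof.
move=> uV; rewrite /edges_in filter_uniq // allpairs_uniq //.
by move=> [x1 b1] [x2 b2] _ _ /= [-> ->].
Qed.

Definition bond (R : realType) (w : edge -> R) (s : Z2 -> bool) (e : edge) : R :=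
  w e * spin (s (end1 e)) * spin (s (end2 e)).

Lemma spin_addb (R : realType) b c : spin (b (+) c) = (-1) ^+ c * spin b :> R.
Proof. by case: b; case: c; rewrite /spin /= ?mul1r ?mulN1r ?opprK. Qed.

Lemma gamma_energy_all_unsatisfied (R : realType) g (w : edge -> R) s :
  all (unsatisfied w s) g -> gamma_energy g w s = - absw g w.
Proof.
move/allP => unsat; rewrite /gamma_energy /absw -sumrN; apply: eq_big_seq => e eg.
have bond_lt0 : bond w s e < 0 := unsat e eg.
rewrite -[LHS]opprK -(ltr0_norm bond_lt0) /bond !normrM.
by case: (s (end1 e)); case: (s (end2 e)); rewrite /spin ?normrN normr1 !mulr1.
Qed.

Definition flip_spins (S : Z2 -> bool) (D : seq Z2) (f : {ffun seq_sub D -> bool}) :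
  {ffun seq_sub D -> bool} := [ffun y => f y (+) S (val y)].

Lemma flip_spinsK S D : involutive (@flip_spins S D).
Proof. by move=> f; apply/ffunP => y; rewrite !ffunE addbK. Qed.

Lemma flip_spins_inj S D : injective (@flip_spins S D).
Proof. exact: inv_inj (@flip_spinsK S D). Qed.

Section BoundaryFlip.
Variables (R : realType) (g : seq edge) (S : Z2 -> bool).
Hypothesis boundaryS : forall e, S (end1 e) (+) S (end2 e) = (e \in g).

Lemma bond_flip (w : edge -> R) s e :
  bond w (fun x => s x (+) S x) e = (-1) ^+ (e \in g) * bond w s e.
Proof.
rewrite /bond !spin_addb -boundaryS.
by case: (S (end1 e)); case: (S (end2 e)); rewrite /= ?mul1r //; ring.
Qed.

Lemma gamma_energy_flip (w : edge -> R) s :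
  gamma_energy g w (fun x => s x (+) S x) = - gamma_energy g w s.
Proof.
rewrite /gamma_energy -sumrN; apply: eq_big_seq => e eg.
by have := bond_flip w s e; rewrite eg expr1 mulN1r.
Qed.

Variable D : seq Z2.
Hypothesis SD : forall x, S x -> x \in D.

Lemma boundary_edges_in e : e \in g -> e \in edges_in (clos D).
Proof.
rewrite mem_edges_in -boundaryS.
case S1: (S (end1 e)) => /= S2.
  by have e1D := SD S1; rewrite (mem_clos e1D) (nbrs_clos e1D (end2_nbrs e)).
by have e2D := SD S2; rewrite (mem_clos e2D) (nbrs_clos e2D (end1_nbrs e)).
Qed.

Hypothesis uniq_g : uniq g.

Lemma hamil_flip (w : edge -> R) s :
  hamil D w (fun x => s x (+) S x) = hamil D w s + 2 * gamma_energy g w s.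
Proof.
have gamma_sub : \sum_(e <- edges_in (clos D) | e \in g) bond w s e = gamma_energy g w s.
  rewrite -big_filter; apply: perm_big; apply: uniq_perm => //.
    by rewrite filter_uniq // edges_in_uniq // clos_uniq.
  by move=> e; rewrite mem_filter andb_idr //; apply: boundary_edges_in.
rewrite /hamil -gamma_sub (bigID (mem g)) [in RHS](bigID (mem g)) /=.
under eq_bigr => e eg do rewrite [_ * _](bond_flip w s e) eg expr1 mulN1r.
under [X in _ + X]eq_bigr => e /negbTE eg do rewrite [_ * _](bond_flip w s e) eg expr0 mul1r.
by rewrite sumrN /bond; ring.
Qed.

Lemma glue_flip_spins tau (f : {ffun seq_sub D -> bool}) :
  Defs.glue tau (flip_spins S f) = (fun x => Defs.glue tau f x (+) S x).
Proof.
apply/funext => x; rewrite /Defs.glue; case: insubP => [y _ <-|x_notin_D] /=.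
  by rewrite ffunE.
by case Sx: (S x); rewrite ?addbF //; move: x_notin_D; rewrite /= SD.
Qed.

Lemma gibbs_le_flip tau (w : edge -> R) beta k (A : (Z2 -> bool) -> bool) :
  (forall s, A s -> expR (2 * beta * gamma_energy g w s) <= k) ->
  gibbs D tau w beta A <= k * gibbs D tau w beta (fun s => A (fun x => s x (+) S x)).
Proof.
move=> A_ratio; rewrite /gibbs mulrA ler_pM2r ?invr_gt0 ?partition_fun_gt0 // mulr_sumr.
rewrite [X in _ <= X](eq_bigl (fun f => A (Defs.glue tau (flip_spins S f)))); last first.
  by move=> f; rewrite glue_flip_spins.
rewrite [X in _ <= X](reindex_inj (@flip_spins_inj S D)) /=.
under [X in _ <= X]eq_bigl => f do rewrite flip_spinsK.
apply: ler_sum => f Af; rewrite glue_flip_spins hamil_flip.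
apply: le_trans (ler_wpM2r (expR_ge0 _) (A_ratio _ Af)).
by rewrite -expRD ler_expR; lra.
Qed.

Lemma gibbs_all_unsatisfied_lt tau (w : edge -> R) beta : g != [::] ->
  gibbs D tau w beta (fun s => all (unsatisfied w s) g)
  < expR (- (2 * beta * absw g w)).
Proof.
move=> g_neq0; pose A s := all (unsatisfied w s) g.
have A_ratio s :
    A s -> expR (2 * beta * gamma_energy g w s) <= expR (- (2 * beta * absw g w)).
  by move=> /gamma_energy_all_unsatisfied ->; rewrite mulrN.
have [e0 e0g] : exists e0, e0 \in g.
  by case: (g) g_neq0 => // e0 g' _; exists e0; rewrite mem_head.
have A_flip s : A s -> ~~ A (fun x => s x (+) S x).
  move=> /allP/(_ e0 e0g) unsat0; apply/negP => /allP/(_ e0 e0g).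
  have := bond_flip w s e0; rewrite e0g expr1 mulN1r /bond /unsatisfied => ->.
  by rewrite oppr_lt0 ltNge (ltW unsat0).
apply: lt_of_le_mul_of_add_le1 (expR_gt0 _) _ (gibbs_disjoint_le1 _ _ _ _ A_flip).
exact: gibbs_le_flip.
Qed.

End BoundaryFlip.

Lemma glue_restr V tau s : {in V, Defs.glue tau (Defs.restr V s) =1 s}.
Proof.
move=> x xV; rewrite /Defs.glue; case: insubP => [y _ <-|]; first by rewrite ffunE.
by rewrite /= xV.
Qed.

Lemma restr_flip S V s :
  Defs.restr V (fun x => s x (+) S x) = flip_spins S (Defs.restr V s).
Proof. by apply/ffunP => y; rewrite !ffunE. Qed.

Lemma measurable_gamma_energy (R : realType) g (V : Z2 -> Prop) s :
  measurable_fun [set: g_sigma_algebraType (@coord_gens R V)]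
    (fun om => gamma_energy g om.1 s).
Proof.
apply: measurable_sum => e; do 2 apply: measurable_funM => //.
exact: measurable_interaction.
Qed.

Section FlipInBox.
Variables (R : realType) (g : seq edge) (S : Z2 -> bool) (C : seq Z2).
Hypotheses (boundaryS : forall e, S (end1 e) (+) S (end2 e) = (e \in g))
  (uniq_g : uniq g) (SC : forall x, S x -> x \in C).
Local Notation K := (clos C).
Local Notation config := {ffun seq_sub K -> bool}.

Let SK x : S x -> x \in K. Proof. by move/SC/mem_clos. Qed.

Definition energy_of (w : edge -> R) (eta : config) :=
  gamma_energy g w (Defs.glue (fun _ => false) eta).

Lemma gamma_energy_restr w s : gamma_energy g w s = energy_of w (Defs.restr K s).
Proof.
apply: eq_big_seq => e /(boundary_edges_in boundaryS SC); rewrite mem_edges_in.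
by case/andP => e1K e2K; rewrite /bond !glue_restr.
Qed.

Lemma energy_of_flip w eta : energy_of w (flip_spins S eta) = - energy_of w eta.
Proof. by rewrite /energy_of glue_flip_spins // gamma_energy_flip. Qed.

Lemma gibbs_restr_le_flip tau w beta c eta : 0 <= beta -> energy_of w eta <= - c ->
  gibbs C tau w beta (fun s => Defs.restr K s == eta)
  <= expR (- (2 * beta * c)) * gibbs C tau w beta (fun s => Defs.restr K s == flip_spins S eta).
Proof.
move=> beta_ge0 low_energy.
have -> : (fun s => Defs.restr K s == flip_spins S eta)
        = (fun s => Defs.restr K (fun x => s x (+) S x) == eta).
  apply/funext => s; rewrite restr_flip -[in RHS](flip_spinsK S eta).
  by rewrite (inj_eq (@flip_spins_inj S K)).
apply: gibbs_le_flip => // s /eqP restr_s.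
rewrite ler_expR gamma_energy_restr restr_s -mulrN.
by apply: ler_wpM2l => //; rewrite mulr_ge0.
Qed.

Variables (beta c : R) (P : probability (OmegaM R) R).
Hypotheses (beta_ge0 : 0 <= beta) (c_gt0 : 0 < c) (dlr : DLR P beta).

(* The DLR equations condition on events of the interactions and of the spins
   outside [C], while the energy of gamma depends on the spins in [K]: events are
   therefore split according to the configuration [eta] on [K]. *)
Definition low_energy (eta : config) : set (OmegaM R) :=
  [set om | energy_of om.1 eta <= - c].
Definition restr_is (eta : config) : set (OmegaM R) :=
  [set om | Defs.restr K om.2 == eta].

Lemma low_energy_sigma V eta : <<s @coord_gens R V >> (low_energy eta).
Proof.
have := measurable_gamma_energy g (V := V) (Defs.glue (fun _ => false) eta) measurableT
  (measurable_itv `]-oo, (- c)]).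
by rewrite setTI; congr (_ _); apply/seteqP; split => om; rewrite /= in_itv.
Qed.

Lemma measurable_low_energy eta : measurable (low_energy eta).
Proof. exact: coord_gens_measurable (low_energy_sigma (V := fun _ => True) eta). Qed.

Lemma measurable_restr_is eta : measurable (restr_is eta).
Proof.
have restr_local s s' :
    {in K, s =1 s'} -> (Defs.restr K s == eta) = (Defs.restr K s' == eta).
  by move=> ss'; congr (_ == _); apply/ffunP => y; rewrite !ffunE; apply: ss' (valP y).
have := @measurable_local_spin_fun R _ bool K _ restr_local measurableT [set true] I.
by rewrite setTI.
Qed.

Let k := expR (- (2 * beta * c)).

Lemma prob_restr_le_flip eta :
  (P (low_energy eta `&` restr_is eta)
   <= k%:E * P (low_energy eta `&` restr_is (flip_spins S eta)))%E.
Proof.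
have measurable_gibbs_restr eta' : measurable_fun (low_energy eta)
    (fun om => (gibbs C om.2 om.1 beta (fun s => Defs.restr K s == eta'))%:E).
  apply/measurable_EFinP/measurable_funTS.
  apply: (@measurable_gibbs R C K) => f s s' ss'.
  by congr (_ == _); apply/ffunP => y; rewrite !ffunE; apply/glue_eq/ss'/valP.
have gibbs_ge0E eta' om :
    (0 <= (gibbs C om.2 om.1 beta (fun s => Defs.restr K s == eta'))%:E)%E.
  by rewrite lee_fin gibbs_ge0.
have low_sigma := low_energy_sigma (V := fun x => x \notin C) eta.
rewrite (dlr (fun t => t == _) low_sigma) (dlr (fun t => t == _) low_sigma).
have measurable_low := measurable_low_energy eta.
rewrite -ge0_integralZl_EFin ?expR_ge0 //; apply: ge0_le_integral => //.
  exact: measurable_funeM.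
by move=> om om_low; rewrite -EFinM lee_fin gibbs_restr_le_flip.
Qed.

Lemma gamma_energy_le_bigsetU :
  [set om : OmegaM R | gamma_energy g om.1 om.2 <= - c]
  = \big[setU/set0]_(eta : config) (low_energy eta `&` restr_is eta).
Proof.
rewrite -bigcup_seq; apply/seteqP; split => om /=.
  move=> om_low; exists (Defs.restr K om.2); first exact: mem_index_enum.
  by split; rewrite /low_energy /restr_is /= -?gamma_energy_restr.
by move=> [eta _ [om_low /eqP restr_om]]; rewrite gamma_energy_restr restr_om.
Qed.

Lemma gamma_energy_ge_bigsetU :
  [set om : OmegaM R | c <= gamma_energy g om.1 om.2]
  = \big[setU/set0]_(eta : config) (low_energy (flip_spins S eta) `&` restr_is eta).
Proof.
rewrite -bigcup_seq; apply/seteqP; split => om /=.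
  move=> om_high; exists (Defs.restr K om.2); first exact: mem_index_enum.
  by split; rewrite /low_energy /restr_is /= ?energy_of_flip -?gamma_energy_restr ?lerN2.
move=> [eta _ [om_high /eqP restr_om]].
by move: om_high; rewrite /low_energy /= gamma_energy_restr restr_om energy_of_flip lerN2.
Qed.

Lemma restr_is_disjoint (F G : config -> set (OmegaM R)) eta eta' : eta != eta' ->
  (F eta `&` restr_is eta) `&` (G eta' `&` restr_is eta') = set0.
Proof.
move=> eta_neq; apply/seteqP; split => // om [[_ /eqP restr_om] [_ /eqP restr_om']].
by move: eta_neq; rewrite -restr_om -restr_om' eqxx.
Qed.

Lemma prob_gamma_energy_le_lt :
  (P [set om : OmegaM R | (gamma_energy g om.1 om.2 <= - c)%R] < k%:E)%E.
Proof.
have measurable_piece eta eta' : measurable (low_energy eta `&` restr_is eta').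
  exact: measurableI (measurable_low_energy _) (measurable_restr_is _).
have P_bigsetU (F : config -> set (OmegaM R)) : (forall eta, measurable (F eta)) ->
    P (\big[setU/set0]_(eta : config) (F eta `&` restr_is eta))
    = (\sum_(eta : config) P (F eta `&` restr_is eta))%E.
  move=> measF; apply: measure_bigsetU_seq; first exact: index_enum_uniq.
    by move=> eta; apply: measurableI (measurable_restr_is _).
  exact: restr_is_disjoint.
set low := [set om : OmegaM R | (gamma_energy g om.1 om.2 <= - c)%R].
pose high := [set om : OmegaM R | c <= gamma_energy g om.1 om.2].
have measurable_low : measurable low.
  by rewrite /low gamma_energy_le_bigsetU; apply: bigsetU_measurable.
have measurable_high : measurable high.
  by rewrite /high gamma_energy_ge_bigsetU; apply: bigsetU_measurable.
have low_le_high : (P low <= k%:E * P high)%E.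
  rewrite /low /high gamma_energy_le_bigsetU gamma_energy_ge_bigsetU.
  rewrite (P_bigsetU _ measurable_low_energy) (P_bigsetU _ (fun _ => measurable_low_energy _)).
  rewrite ge0_sume_distrr //.
  rewrite [X in (_ <= X)%E](reindex_inj (@flip_spins_inj S K)) /=.
  by apply: lee_sum => eta _; rewrite flip_spinsK prob_restr_le_flip.
have low_high_le1 : (P low + P high <= 1)%E.
  rewrite -measureU ?probability_le1 //; first exact: measurableU.
  apply/seteqP; split => // om [om_low om_high].
  have oppc_lt_c : - c < c by rewrite (lt_trans _ c_gt0) // oppr_lt0.
  by have := lt_le_trans oppc_lt_c (le_trans om_high om_low); rewrite ltxx.
have fineP A : measurable A -> (fine (P A))%:E = P A.
  by move=> measA; rewrite fineK // fin_num_measure.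
rewrite -fineP // lte_fin.
apply: (lt_of_le_mul_of_add_le1 (q := fine (P high)) (expR_gt0 _)).
  by rewrite -lee_fin EFinM !fineP.
by rewrite -lee_fin EFinD !fineP.
Qed.

End FlipInBox.

(** * The region enclosed by gamma *)

Lemma odd_sumn_count (T : Type) (f : T -> nat) (s : seq T) :
  odd (\sum_(x <- s) f x) = odd (count (odd \o f) s).
Proof. by elim: s => [|x s IH]; rewrite ?big_nil ?big_cons //= !oddD IH oddb. Qed.

Lemma odd_count_addb (T : Type) (p q : pred T) (s : seq T) :
  odd (count (fun x => p x (+) q x) s) = odd (count p s) (+) odd (count q s).
Proof.
elim: s => //= x s IH; rewrite !oddD IH.
by case: (p x); case: (q x); case: (odd (count p s)); case: (odd (count q s)).
Qed.

Lemma sumn_nat_of_bool (T : Type) (p : pred T) (s : seq T) :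
  (\sum_(x <- s) p x)%N = count p s.
Proof. by elim: s => [|x s IH]; rewrite ?big_nil ?big_cons //= IH. Qed.

Lemma count_predU_disjoint (T : Type) (p q : pred T) (s : seq T) :
  (forall x, p x -> ~~ q x) -> count (predU p q) s = (count p s + count q s)%N.
Proof.
move=> pq; rewrite -count_predUI (@eq_count _ (predI p q) pred0) ?count_pred0 ?addn0 //.
by move=> x /=; case px: (p x) => //=; apply/negbTE/pq.
Qed.

Definition incident (v : dvert) (e : edge) : bool :=
  ((dual_ends e).1 == v) || ((dual_ends e).2 == v).

Lemma dual_ends_neq e : (dual_ends e).1 != (dual_ends e).2.
Proof.
by case: e => [[x1 x2] []]; rewrite /dual_ends /= xpair_eqE negb_and;
  apply/orP; [right | left]; apply/negP => /eqP; lia.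
Qed.

Section RayParity.
Variable g : seq edge.

(* [x] is inside the dual graph [g] when the horizontal ray from [x] to the right
   crosses it an odd number of times; the ray crosses the dual of the horizontal
   edge ((a, x.2), true) exactly when x.1 <= a. *)
Definition ray_crossings (x : Z2) : nat :=
  count (fun e : edge => [&& e.2, e.1.2 == x.2 & x.1 <= e.1.1]) g.
Definition inside (x : Z2) : bool := odd (ray_crossings x).

Lemma handshake_even (U : pred dvert) :
  (forall v, ~~ odd (count (incident v) g)) ->
  ~~ odd (\sum_(e <- g) (U (dual_ends e).1 + U (dual_ends e).2)%N).
Proof.
move=> even_deg.
pose ends (e : edge) := [:: (dual_ends e).1; (dual_ends e).2].
pose V := undup [seq u <- flatten (map ends g) | U u].
have U_deg e : e \in g -> (U (dual_ends e).1 + U (dual_ends e).2)%N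
                          = (\sum_(v <- V) incident v e)%N.
  move=> eg; rewrite sumn_nat_of_bool.
  rewrite (@eq_count _ _ (predU (pred1 (dual_ends e).1) (pred1 (dual_ends e).2))); last first.
    by move=> v; rewrite /incident /= ![_ == v]eq_sym.
  rewrite count_predU_disjoint => [|v /eqP ->]; last exact: dual_ends_neq.
  rewrite !count_uniq_mem ?undup_uniq // !mem_undup !mem_filter !andb_idr // => _;
    by apply/flatten_mapP; exists e => //; rewrite /ends !inE eqxx ?orbT.
rewrite (eq_big_seq _ U_deg) exchange_big /=.
apply: (big_ind (fun n => ~~ odd n)) => // [m n|v _]; last by rewrite sumn_nat_of_bool.
by rewrite oddD => /negbTE-> /negbTE->.
Qed.

Hypothesis uniq_g : uniq g.

Lemma inside_right a b : inside (a, b) = inside (a + 1, b) (+) (((a, b), true) \in g).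
Proof.
rewrite /inside /ray_crossings /= -[_ \in g]oddb -(count_uniq_mem _ uniq_g) -odd_count_addb.
congr odd; apply: eq_count => -[[x1 x2] []] /=; rewrite !xpair_eqE /= ?andbF //.
by case: (x2 == b); rewrite /= ?andbT ?andbF //; lia.
Qed.

Hypothesis even_deg : forall v, ~~ odd (count (incident v) g).

Lemma inside_up a b : inside (a, b) = inside (a, b + 1) (+) (((a, b), false) \in g).
Proof.
(* The edges of [g] have an even number of endpoints in the dual half-row
   [U = {(u, b) | a <= u}]; modulo 2 this number is
   ray_crossings (a, b + 1) + ray_crossings (a, b) + [((a, b), false) \in g]. *)
pose U (u : dvert) := (u.2 == b) && (a <= u.1).
have := handshake_even U even_deg; rewrite odd_sumn_count.
rewrite (@eq_count _ _ (fun e : edge =>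
   ([&& e.2, e.1.2 == b + 1 & a <= e.1.1] (+) [&& e.2, e.1.2 == b & a <= e.1.1])
   (+) (e == ((a, b), false)))); last first.
  move=> [[x1 x2] []]; rewrite /U /dual_ends /= oddD !oddb !xpair_eqE /= ?andbT ?andbF.
    by rewrite addbF; congr (_ (+) _); lia.
  by case: (x2 == b); rewrite /= ?andbT ?andbF //; lia.
have count_m : count (fun e : edge => e == ((a, b), false)) g = (((a, b), false) \in g).
  exact: count_uniq_mem.
rewrite !odd_count_addb count_m oddb /inside /ray_crossings /=.
by case: (odd _); case: (odd _); case: (_ \in g).
Qed.

Lemma inside_boundary e : inside (end1 e) (+) inside (end2 e) = (e \in g).
Proof.
case: e => [[a b] []]; rewrite /end1 /end2 /=; first by rewrite inside_right addbC addKb.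
by rewrite inside_up addbC addKb.
Qed.

Definition gamma_radius : int := 1 + \sum_(e <- g) (`|e.1.1| + `|e.1.2|).

Lemma gamma_radius_gt e : e \in g -> `|e.1.1| < gamma_radius /\ `|e.1.2| < gamma_radius.
Proof.
move=> eg; have : `|e.1.1| + `|e.1.2| <= \sum_(e <- g) (`|e.1.1| + `|e.1.2|).
  by rewrite (big_rem e eg) /= lerDl sumr_ge0 // => e' _; rewrite addr_ge0.
by rewrite /gamma_radius; have := normr_ge0 e.1.1; have := normr_ge0 e.1.2; lia.
Qed.

Lemma inside_bounded_right a b :
  inside (a, b) -> a < gamma_radius /\ - gamma_radius < b < gamma_radius.
Proof.
rewrite /inside /ray_crossings /= => odd_crossings.
have /hasP[[[x1 x2] d] eg /and3P[_ /eqP <- ax1]] :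
    has (fun e : edge => [&& e.2, e.1.2 == b & a <= e.1.1]) g.
  by rewrite has_count; case: (count _ g) odd_crossings.
have [/= x1_lt x2_lt] := gamma_radius_gt eg.
by move: ax1 x1_lt x2_lt; rewrite /= !ltr_norml; lia.
Qed.

Lemma inside_far_left a b : a <= - gamma_radius -> inside (a, b) = false.
Proof.
move=> a_left; have inside_step b' : inside (a, b') = inside (a, b' + 1).
  have edge_notin : ((a, b'), false) \notin g.
    by apply/negP => /gamma_radius_gt /= [+ _]; rewrite ltr_norml; lia.
  by rewrite inside_up (negbTE edge_notin) addbF.
have inside_shift n : inside (a, b) = inside (a, b + n%:Z).
  by elim: n => [|n IH]; rewrite ?addr0 // IH inside_step; congr (inside (_, _)); lia.
rewrite (inside_shift `|gamma_radius - b|%N); apply/negP => /inside_bounded_right; lia.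
Qed.

Lemma inside_bounded x :
  inside x -> - gamma_radius < x.1 < gamma_radius /\ - gamma_radius < x.2 < gamma_radius.
Proof.
case: x => a b /= inside_ab; have [a_lt b_bound] := inside_bounded_right inside_ab.
split => //; case: (ltrP (- gamma_radius) a) => [_|a_left]; first by rewrite a_lt.
by rewrite inside_far_left in inside_ab.
Qed.

Lemma inside_finite : exists C : seq Z2, forall x, inside x -> x \in C.
Proof.
pose coords := [seq n%:Z - gamma_radius | n <- iota 0 (absz (2 * gamma_radius))].
have mem_coords a : - gamma_radius < a < gamma_radius -> a \in coords.
  move=> a_bound; apply/mapP; exists (absz (a + gamma_radius)); last lia.
  by rewrite mem_iota add0n; lia.
exists [seq (a, b) | a <- coords, b <- coords] => -[a b] /inside_bounded [a_bound b_bound].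
exact: allpairs_f (mem_coords _ a_bound) (mem_coords _ b_bound).
Qed.

End RayParity.

Lemma dual_ends_inj : injective dual_ends.
Proof.
move=> [[x1 x2] []] [[y1 y2] []]; rewrite /dual_ends /= => -[] *; try lia.
all: by congr (_, _, _); lia.
Qed.

Lemma dual_ends_sum e :
  (dual_ends e).2.1 + (dual_ends e).2.2 = (dual_ends e).1.1 + (dual_ends e).1.2 + 1.
Proof. by case: e => [[x1 x2] []]; rewrite /dual_ends /=; lia. Qed.

Lemma crossesC e u v : crosses e u v = crosses e v u.
Proof. by rewrite /crosses orbC. Qed.

Lemma crosses_inj e e' u v : crosses e u v -> crosses e' u v -> e = e'.
Proof.
rewrite /crosses => /orP[] /eqP de /orP[] /eqP de'; apply: dual_ends_inj; rewrite ?de ?de' //.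
all: by have := dual_ends_sum e; have := dual_ends_sum e'; rewrite de de' /=; lia.
Qed.

Lemma crosses_eq e u v v' : crosses e u v -> crosses e u v' -> v = v'.
Proof.
by rewrite /crosses => /orP[] /eqP -> /orP[] /eqP [] // -> ->.
Qed.

Lemma crosses_incident e u v : crosses e u v -> incident u e && incident v e.
Proof. by rewrite /crosses /incident => /orP[] /eqP -> /=; rewrite !eqxx ?orbT. Qed.

Lemma incident_crosses e u v x : crosses e u v -> incident x e -> (x == u) || (x == v).
Proof.
by rewrite /crosses /incident => /orP[] /eqP -> /= /orP[] /eqP <-; rewrite eqxx ?orbT.
Qed.

Lemma cycle_edge_incident p e v : cycle_edge p e -> incident v e -> v \in p.
Proof.
move=> [i [ip cross_e]] /(incident_crosses cross_e) /orP[] /eqP ->; apply: mem_nth => //.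
by rewrite ltn_pmod //; case: (size p) ip.
Qed.

Lemma modn_succ i k : (i < k)%N -> (i.+1 %% k)%N = if i == k.-1 then 0%N else i.+1.
Proof.
move=> ik; case: eqP => [->|ik1]; first by rewrite prednK ?modnn //; lia.
by rewrite modn_small //; lia.
Qed.

Lemma simple_cycle_incident p v : simple_dual_cycle p -> v \in p ->
  exists e0 e1, e0 != e1 /\
    forall e, cycle_edge p e /\ incident v e <-> e = e0 \/ e = e1.
Proof.
move=> [k_ge3 [uniq_p cross]] vp; set k := size p in k_ge3 cross.
set i := index v p; have ik : (i < k)%N by rewrite index_mem.
have pi : nth (0, 0) p i = v by rewrite nth_index.
have nth_inj m n : (m < k)%N -> (n < k)%N -> nth (0, 0) p m = nth (0, 0) p n -> m = n.
  by move=> mk nk /eqP; rewrite nth_uniq // => /eqP.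
pose j := if i == 0%N then k.-1 else i.-1.
have jk : (j < k)%N by rewrite /j; case: eqP; lia.
have ji : (j.+1 %% k)%N = i by rewrite modn_succ // /j; case: eqP; case: eqP; lia.
have i1k : (i.+1 %% k < k)%N by rewrite ltn_pmod //; lia.
have [e0 cross0] := cross j jk; have [e1 cross1] := cross i ik.
rewrite /cnext ji pi crossesC in cross0; rewrite /cnext pi in cross1.
exists e0, e1; split.
  apply/eqP => e01; rewrite -e01 in cross1.
  have := nth_inj _ _ jk i1k (crosses_eq cross0 cross1).
  by rewrite modn_succ // /j; case: eqP; case: eqP; lia.
move=> e; split => [[[l [lk cross_l]] inc_v] | [] ->].
- have l1k : (l.+1 %% k < k)%N by rewrite ltn_pmod //; lia.
  case/orP: (incident_crosses cross_l inc_v) => /eqP pl; rewrite /cnext in pl.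
    have li : l = i by apply: nth_inj; rewrite // pi.
    by right; apply: crosses_inj cross_l _; rewrite li pi.
  have l1i : (l.+1 %% k)%N = i by apply: nth_inj; rewrite // pi.
  have lj : l = j by move: l1i; rewrite modn_succ // /j; case: eqP; case: eqP; lia.
  by left; apply: crosses_inj cross_l _; rewrite lj crossesC /cnext ji pi.
- split; last by case/andP: (crosses_incident cross0).
  by exists j; split => //; rewrite /cnext ji pi crossesC.
- split; last by case/andP: (crosses_incident cross1).
  by exists i; split => //; rewrite /cnext pi.
Qed.

Lemma dual_degree_even g : uniq g -> union_disjoint_simple_cycles g ->
  forall v, ~~ odd (count (incident v) g).
Proof.
move=> uniq_g [cs [_ [cycles [disjoint mem_g]]]] v.
have same_cycle p p' : p \in cs -> p' \in cs -> v \in p -> v \in p' -> p = p'.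
  move=> pcs p'cs vp vp'; case: (index p cs =P index p' cs) => [eq_index|neq_index].
    by rewrite -(nth_index [::] pcs) -(nth_index [::] p'cs) eq_index.
  have ip : (index p cs < size cs)%N by rewrite index_mem.
  have ip' : (index p' cs < size cs)%N by rewrite index_mem.
  by move: (disjoint _ _ ip ip' neq_index v); rewrite !nth_index // vp vp' => /(_ isT).
case: (boolP (has (fun p => v \in p) cs)) => [/hasP[p pcs vp] | no_cycle]; last first.
  suff -> : count (incident v) g = 0%N by [].
  apply/eqP; rewrite -leqn0 leqNgt -has_count; apply/hasP => -[e /mem_g [p pcs cyc] inc_v].
  by move/hasP: no_cycle; apply; exists p => //; apply: cycle_edge_incident cyc inc_v.
have [e0 [e1 [e01 incident_v]]] := simple_cycle_incident (cycles p pcs) vp.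
suff /perm_size : perm_eq [seq e <- g | incident v e] [:: e0; e1].
  by rewrite size_filter => ->.
apply: uniq_perm; [exact: filter_uniq | by rewrite /= inE e01 | move=> e].
rewrite mem_filter !inE; apply/andP/orP => [[inc_v /mem_g [p' p'cs cyc']] | e_e01].
  have p'p : p' = p := same_cycle _ _ p'cs pcs (cycle_edge_incident cyc' inc_v) vp.
  have /incident_v [->|->] : cycle_edge p e /\ incident v e by rewrite -p'p.
    by left.
  by right.
have [cyc inc_v] : cycle_edge p e /\ incident v e.
  by apply/incident_v; case: e_e01 => /eqP; [left | right].
by split => //; apply/mem_g; exists p.
Qed.

Section NearestInteger.
Variable R : realType.

Definition nearest_int (r : R) : int := Num.floor (r + 2^-1).

Lemma nearest_int_bounds r :
  (nearest_int r)%:~R - 2^-1 <= r < (nearest_int r)%:~R + 2^-1.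
Proof.
have /andP[] := floor_itv (r + 2^-1); rewrite -/(nearest_int r) intrD => lo hi.
by apply/andP; split; lra.
Qed.

Lemma nearest_int_eq r k : k%:~R - 2^-1 <= r < k%:~R + 2^-1 -> nearest_int r = k.
Proof. by move=> /andP[lo hi]; apply: floor_def; rewrite intrD; apply/andP; split; lra. Qed.

Lemma nearest_intz (n : int) : nearest_int n%:~R = n.
Proof. by apply: nearest_int_eq; apply/andP; split; lra. Qed.

Lemma intr_neq_half (m : int) : (m%:~R : R) <> 2^-1.
Proof.
move=> m_half; have [m_le0|m_ge1] : (m <= 0) \/ (1 <= m) by lia.
  have : (m%:~R : R) <= 0 by rewrite lerz0.
  lra.
have : (1 : R) <= m%:~R by rewrite ler1z.
lra.
Qed.

Lemma nearest_int_near r : exists2 d : R, 0 < d & forall y, `|r - y| < d ->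
  nearest_int y = nearest_int r \/
  r = (nearest_int r)%:~R - 2^-1 /\ nearest_int y = nearest_int r - 1.
Proof.
set k := nearest_int r; have /andP[lo hi] := nearest_int_bounds r.
have [r_edge|r_inner] := eqVneq r (k%:~R - 2^-1).
  exists (2^-1); first lra.
  move=> y; rewrite ltr_norml => /andP[y_lo y_hi].
  have [y_ge|y_lt] := lerP (k%:~R - 2^-1) y.
    by left; apply: nearest_int_eq; apply/andP; split; lra.
  by right; split => //; apply: nearest_int_eq; rewrite intrB; apply/andP; split; lra.
have lo' : k%:~R - 2^-1 < r by rewrite lt_neqAle eq_sym r_inner.
exists (Num.min (r - (k%:~R - 2^-1)) (k%:~R + 2^-1 - r)); first by rewrite lt_min; lra.
move=> y; rewrite lt_min !ltr_norml => /andP[/andP[y_lo y_hi] /andP[y_lo' y_hi']].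
by left; apply: nearest_int_eq; apply/andP; split; lra.
Qed.

Lemma norm_le_of_nearest_int (r : R) (U : int) :
  - U < nearest_int r < U -> `|r| <= U%:~R + 1.
Proof.
move=> /andP[lo hi]; have /andP[r_lo r_hi] := nearest_int_bounds r.
have : (nearest_int r)%:~R <= (U - 1)%:~R :> R by rewrite ler_int; lia.
have : (- U + 1)%:~R <= (nearest_int r)%:~R :> R by rewrite ler_int; lia.
by rewrite intrB intrD mulrNz ler_norml => *; apply/andP; split; lra.
Qed.

End NearestInteger.

Section InsideIsEnclosed.
Variables (R : realType) (g : seq edge).
Hypotheses (uniq_g : uniq g) (even_deg : forall v, ~~ odd (count (incident v) g)).

(* [inside] extended to the plane by rounding to the nearest vertex: it is constant
   off [gamma_set g], hence on each connected component of the complement. *)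
Definition inside_pt (z : R * R) : bool := inside g (nearest_int z.1, nearest_int z.2).

Lemma inside_left_eq k1 k2 (z : R * R) : ~ gamma_set g z -> z.1 = k1%:~R - 2^-1 ->
  k2%:~R - 2^-1 <= z.2 <= k2%:~R + 2^-1 -> inside g (k1 - 1, k2) = inside g (k1, k2).
Proof.
move=> z_off z1 /andP[lo hi].
have edge_notin : ((k1 - 1, k2), true) \notin g.
  apply/negP => eg; apply: z_off; exists ((k1 - 1, k2), true) => //.
  exists (z.2 - (k2%:~R - 2^-1)); split; first by apply/andP; split; lra.
  by rewrite /dpt /dual_ends /= !intrB; case: z z1 lo hi => z1 z2 /= *; congr (_, _); lra.
by rewrite (inside_right uniq_g (k1 - 1)) subrK (negbTE edge_notin) addbF.
Qed.

Lemma inside_down_eq k1 k2 (z : R * R) : ~ gamma_set g z -> z.2 = k2%:~R - 2^-1 ->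
  k1%:~R - 2^-1 <= z.1 <= k1%:~R + 2^-1 -> inside g (k1, k2 - 1) = inside g (k1, k2).
Proof.
move=> z_off z2 /andP[lo hi].
have edge_notin : ((k1, k2 - 1), false) \notin g.
  apply/negP => eg; apply: z_off; exists ((k1, k2 - 1), false) => //.
  exists (z.1 - (k1%:~R - 2^-1)); split; first by apply/andP; split; lra.
  by rewrite /dpt /dual_ends /= !intrB; case: z z2 lo hi => z1 z2 /= *; congr (_, _); lra.
by rewrite (inside_up uniq_g even_deg k1 (k2 - 1)) subrK (negbTE edge_notin) addbF.
Qed.

Lemma inside_pt_locally_constant z :
  ~ gamma_set g z -> nbhs z [set y | inside_pt y = inside_pt z].
Proof.
move=> z_off; have [d1 d1_gt0 near1] := nearest_int_near z.1.
have [d2 d2_gt0 near2] := nearest_int_near z.2.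
rewrite nbhs_ballP; exists (Num.min d1 d2); first by rewrite /= lt_min d1_gt0 d2_gt0.
move=> y []; rewrite -!ball_normE /ball_ /= !lt_min => /andP[y1 _] /andP[_ y2].
have /andP[lo1 hi1] := nearest_int_bounds z.1; have /andP[lo2 hi2] := nearest_int_bounds z.2.
rewrite /inside_pt /=.
case: (near1 _ y1) => [-> | [z1 ->]]; case: (near2 _ y2) => [-> | [z2 ->]] //.
- by apply: (inside_down_eq z_off z2); apply/andP; split; lra.
- by apply: (inside_left_eq z_off z1); apply/andP; split; lra.
rewrite (inside_down_eq (k1 := nearest_int z.1 - 1) z_off z2); last first.
  by rewrite intrB; apply/andP; split; lra.
by apply: (inside_left_eq z_off z1); apply/andP; split; lra.
Qed.

Lemma connected_component_inside_pt x : ~ gamma_set g x ->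
  connected_component (~` gamma_set g) x `<=` [set y | inside_pt y = inside_pt x].
Proof.
move=> x_off y [C [Cx C_off C_conn] Cy].
suff C_eq : C `&` [set y | inside_pt y = inside_pt x] = C by move: Cy; rewrite -C_eq => -[].
apply: C_conn.
- by exists x; split.
- exists (interior [set y | inside_pt y = inside_pt x]); first exact: open_interior.
  apply/seteqP; split => u [Cu u_eq]; split => //; last exact: nbhs_singleton u_eq.
  by rewrite /interior /= -u_eq; apply: inside_pt_locally_constant (C_off u Cu).
- exists (~` interior [set y | inside_pt y != inside_pt x]).
    exact/open_closedC/open_interior.
  apply/seteqP; split => u [Cu u_eq]; split => //.
    by move=> /nbhs_singleton /=; rewrite u_eq eqxx.
  apply: contrapT => /eqP u_neq; apply: u_eq; rewrite /interior /=.
  by apply: filterS (inside_pt_locally_constant (C_off u Cu)) => v /= ->.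
Qed.

Lemma inside_D_gamma x : inside g x -> D_gamma (R := R) g x.
Proof.
move=> inside_x; have x_off : ~ gamma_set (R := R) g (x.1%:~R, x.2%:~R).
  move=> [[[e1 e2] []] eg [t [/andP[t0 t1] []]]]; rewrite /dpt /dual_ends /= => x1 x2.
    by apply: (@intr_neq_half R (x.1 - e1)); rewrite intrB; lra.
  by apply: (@intr_neq_half R (x.2 - e2)); rewrite intrB; lra.
split => //; have inside_pt_x : inside_pt (x.1%:~R, x.2%:~R).
  by rewrite /inside_pt /= !nearest_intz -surjective_pairing.
apply: filterS (nbhs_pinfty_ge (num_real ((gamma_radius g)%:~R + 1 : R))).
move=> M M_ge y /(connected_component_inside_pt x_off) /=; rewrite inside_pt_x.
move=> /(inside_bounded uniq_g even_deg) /= [y1 y2].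
rewrite prod_normE ge_max; apply/andP.
by split; apply: le_trans M_ge; apply: norm_le_of_nearest_int.
Qed.

End InsideIsEnclosed.

Lemma union_disjoint_simple_cycles_neq_nil g :
  union_disjoint_simple_cycles g -> g != [::].
Proof.
case=> -[|p cs] [// _ [cycles [_ mem_g]]].
have [k_ge3 [_ cross]] := cycles p (mem_head _ _).
have p_gt0 : (0 < size p)%N by lia.
have [e cross_e] := cross 0%N p_gt0.
have : e \in g by apply/mem_g; exists p; [exact: mem_head | exists 0%N].
by case: (g).
Qed.

Theorem mainTheorem4 (R : realType) (beta : R) (P : probability (OmegaM R) R)
  (g : seq edge) :
  0 <= beta ->
  EA_spin_glass beta P -> transl_invariant P ->
  uniq g -> union_disjoint_simple_cycles g ->
  (forall c : R, 0 < c ->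
     (P [set om : OmegaM R | (gamma_energy g om.1 om.2 <= - c)%R]
      < (expR (- (2 * beta * c)))%:E)%E)
  /\
  (forall (D : seq Z2), (forall v, D_gamma (R:=R) g v -> v \in D) ->
   forall (tau : Z2 -> bool) (w : edge -> R),
     gibbs D tau w beta (fun s => all (unsatisfied w s) g)
     < expR (- (2 * beta * absw g w))).
Proof.
move=> beta_ge0 [_ dlr] _ uniq_g gamma_cycles.
have even_deg := dual_degree_even uniq_g gamma_cycles.
have boundary := inside_boundary uniq_g even_deg.
split => [c c_gt0 | D D_gamma_sub tau w].
  have [C inside_C] := inside_finite uniq_g even_deg.
  exact: (prob_gamma_energy_le_lt boundary uniq_g inside_C beta_ge0 c_gt0 dlr).
have inside_D x : inside g x -> x \in D.
  by move/(inside_D_gamma R uniq_g even_deg)/D_gamma_sub.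
exact: (gibbs_all_unsatisfied_lt boundary inside_D uniq_g tau w beta
  (union_disjoint_simple_cycles_neq_nil gamma_cycles)).
Qed.
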